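(* Let $\mathcal{I}$ and $\mathcal{J}$ be isomorphic sharp interval systems. For every hypergraph isomorphism $\psi$ from $\mathcal{I}$ to $\mathcal{J}$ there is a hypergraph isomorphism $\psi'$ from $\mathcal{I}$ to $\mathcal{J}$ such that $\psi'(A)=\psi(A)$ for all $A\in\mathcal{I}$ and, moreover, $\psi'$ maps the two extreme points of each interval $A\in\mathcal{I}$ onto the two extreme points of the interval $\psi(A)\in\mathcal{J}$.
   Context: An interval system is a hypergraph whose vertex set is $\{1,\dots,N\}$ and whose hyperedges are intervals of consecutive integers $[a,b]=\{a,a+1,\dots,b\}$; the extreme points of $[a,b]$ are $a$ and $b$. An interval system with $m$ intervals is sharp if $N=2m$ and the $2m$ extreme points of its intervals are pairwise distinct (so every point is the start or the end point of exactly one interval). A hypergraph isomorphism from $\mathcal{I}$ to $\mathcal{J}$ is a bijection between their vertex sets mapping the set of hyperedges of $\mathcal{I}$ onto that of $\mathcal{J}$. *)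

(* Vertex set {1,...,N} is represented by 'I_N = {0,...,N-1}
   (shift by one, order preserved). *)
From mathcomp Require Import all_boot.
Set Implicit Arguments. Unset Strict Implicit. Unset Printing Implicit Defensive.

Definition interval_of (N : nat) (a b : 'I_N) : {set 'I_N} :=
  [set x : 'I_N | (a <= x <= b)%N].

Definition is_interval (N : nat) (A : {set 'I_N}) : Prop :=
  exists a b : 'I_N, (a <= b)%N /\ A = interval_of a b.

Definition interval_system (N : nat) (I : {set {set 'I_N}}) : Prop :=
  forall A, A \in I -> is_interval A.

Definition extremes (N : nat) (A : {set 'I_N}) : {set 'I_N} :=
  [set x in A | [forall y in A, (x <= y)%N] || [forall y in A, (y <= x)%N]].

Definition sharp (N : nat) (I : {set {set 'I_N}}) : Prop :=
  [/\ interval_system I,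
      N = (2 * #|I|)%N,
      forall A, A \in I -> #|extremes A| = 2 &
      forall A B, A \in I -> B \in I -> A != B ->
        [disjoint extremes A & extremes B]].

Definition hyp_iso (N M : nat) (I : {set {set 'I_N}}) (J : {set {set 'I_M}})
    (psi : 'I_N -> 'I_M) : Prop :=
  bijective psi /\ [set psi @: (A : {set 'I_N}) | A in I] = J.

From mathcomp Require Import all_boot zify.
Set Implicit Arguments. Unset Strict Implicit. Unset Printing Implicit Defensive.

(* Pulling
   the order of J back along psi gives a second order on the vertices of I
   for which I is again a sharp interval system, and whose ends of A are
   the preimages of the extremes of psi(A).  So it suffices to find a
   permutation pi of the vertices that fixes every interval of I and sends
   its ends for the natural order onto its ends for the second order; then
   psi' = psi \o pi works (relabel_ends, lemma10).
   The permutation matches vertices with the same key: their type (the set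
   of intervals containing them) and the interval of which they are an end.
   This is possible because each key class has a size that depends on the
   hypergraph only (class_ends_count): if the meet of the type S belongs to
   S, every vertex of type S is an end of that meet; otherwise only the
   interval of S starting last and the one ending first can have an end of
   type S, and whether they do is the order-free notion of being exposed
   (exposed_left, and exposed_right obtained by reversing the order).
   Orders are represented by injective rank functions r : V -> nat. *)

Definition rint (V : finType) (r : V -> nat) (a b : V) : {set V} :=
  [set x | r a <= r x <= r b].

Definition ends (V : finType) (r : V -> nat) (A : {set V}) : {set V} :=
  [set x in A | [forall y in A, r x <= r y] || [forall y in A, r y <= r x]].

Definition left_end (V : finType) (r : V -> nat) (x0 : V) (A : {set V}) : V :=
  odflt x0 [pick x in A | [forall y in A, r x <= r y]].

Definition right_end (V : finType) (r : V -> nat) (x0 : V) (A : {set V}) : V :=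
  odflt x0 [pick x in A | [forall y in A, r y <= r x]].

Record sharp_wrt (V : finType) (r : V -> nat) (I : {set {set V}}) : Prop := SharpWrt {
  rank_inj : injective r;
  rank_interval : {in I, forall A, exists a b, r a <= r b /\ A = rint r a b};
  ends_card : {in I, forall A, #|ends r A| = 2};
  ends_disjoint : {in I &, forall A B, A != B -> [disjoint ends r A & ends r B]};
  card_sharp : #|V| = 2 * #|I| }.

Definition vtype (V : finType) (I : {set {set V}}) (x : V) : {set {set V}} :=
  [set A in I | x \in A].

Definition vclass (V : finType) (I S : {set {set V}}) : {set V} :=
  [set x | vtype I x == S].

Definition meet (V : finType) (S : {set {set V}}) : {set V} := \bigcap_(B in S) B.

(* A in S is exposed if it is essential in the meet of S (removing it makes
   the meet grow) and no interval outside S joins the meet of S with the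
   vertices gained by removing A. *)
Definition exposed (V : finType) (I S : {set {set V}}) (A : {set V}) : bool :=
  [&& A \in S, ~~ (meet (S :\ A) \subset A) &
      [forall E in I :\: S,
         [disjoint E & meet S] || [disjoint E & meet (S :\ A) :\: A]]].

(* The number of vertices of type S that are ends of A (class_ends_count). *)
Definition end_count (V : finType) (I S : {set {set V}}) (A : {set V}) : nat :=
  if meet S \in S then (A == meet S) * #|vclass I S| else exposed I S A.

Section Endpoints.
Variables (V : finType) (r : V -> nat) (x0 : V) (I : {set {set V}}).
Hypothesis sh : sharp_wrt r I.

Local Notation le := (left_end r x0).
Local Notation re := (right_end r x0).

Lemma rint_ends a b : r a <= r b ->
  [/\ le (rint r a b) = a, re (rint r a b) = b & ends r (rint r a b) = [set a; b]].
Proof.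
move=> hab; have r_inj := rank_inj sh.
have ain : a \in rint r a b by rewrite inE leqnn hab.
have bin : b \in rint r a b by rewrite inE leqnn hab.
have amin : [forall y in rint r a b, r a <= r y].
  by apply/forall_inP => y; rewrite inE => /andP[].
have bmax : [forall y in rint r a b, r y <= r b].
  by apply/forall_inP => y; rewrite inE => /andP[].
split.
- rewrite /left_end; case: pickP => [x /andP[xin /forall_inP xmin] | /(_ a)].
    move: xin; rewrite inE => /andP[xa _].
    by apply: r_inj; apply/eqP; rewrite eqn_leq xa xmin.
  by rewrite ain amin.
- rewrite /right_end; case: pickP => [x /andP[xin /forall_inP xmax] | /(_ b)].
    move: xin; rewrite inE => /andP[_ xb].
    by apply: r_inj; apply/eqP; rewrite eqn_leq xb xmax.
  by rewrite bin bmax.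
apply/setP => x; rewrite !inE; apply/idP/idP.
  case/andP => /andP[xa xb] /orP[] /forall_inP xext.
    by rewrite (r_inj x a _) ?eqxx //; apply/eqP; rewrite eqn_leq xa xext.
  by rewrite (r_inj x b _) ?eqxx ?orbT //; apply/eqP; rewrite eqn_leq xb xext.
by case/orP => /eqP ->; rewrite leqnn hab ?amin ?bmax ?orbT.
Qed.

Lemma interval_ends A : A \in I ->
  [/\ A = rint r (le A) (re A), r (le A) < r (re A) & ends r A = [set le A; re A]].
Proof.
move=> AI; have [a [b [hab eA]]] := rank_interval sh AI; subst A.
have [-> -> ends_ab] := rint_ends hab.
split=> //; rewrite ltn_neqAle hab andbT.
apply/eqP => /(rank_inj sh) ab.
by move: (ends_card sh AI); rewrite ends_ab ab setUid cards1.
Qed.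

Lemma mem_interval A x : A \in I -> (x \in A) = (r (le A) <= r x <= r (re A)).
Proof. by case/interval_ends => eA _ _; rewrite {1}eA inE. Qed.

Lemma ends_sub A : ends r A \subset A.
Proof. by apply/subsetP => x; rewrite inE => /andP[]. Qed.

Lemma left_end_ends A : A \in I -> le A \in ends r A.
Proof. by case/interval_ends => _ _ ->; rewrite !inE eqxx. Qed.

Lemma right_end_ends A : A \in I -> re A \in ends r A.
Proof. by case/interval_ends => _ _ ->; rewrite !inE eqxx orbT. Qed.

Lemma ends_unique A B x :
  A \in I -> B \in I -> x \in ends r A -> x \in ends r B -> A = B.
Proof.
move=> AI BI xA xB; apply/eqP; apply: contraTT xB => AB.
by rewrite (disjointFr (ends_disjoint sh AI BI AB) xA).
Qed.

Lemma left_end_inj : {in I &, injective le}.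
Proof.
move=> A B AI BI eAB; apply: (ends_unique AI BI (left_end_ends AI)).
by rewrite eAB left_end_ends.
Qed.

Lemma right_end_inj : {in I &, injective re}.
Proof.
move=> A B AI BI eAB; apply: (ends_unique AI BI (right_end_ends AI)).
by rewrite eAB right_end_ends.
Qed.

(* Counting: the 2|I| ends are pairwise distinct and there are 2|I|
   vertices, so every vertex is an end of some interval. *)
Lemma ends_cover x : exists2 A, A \in I & x \in ends r A.
Proof.
pose P := [set ends r A | A in I].
have ends_inj : {in I &, injective (ends r)}.
  move=> A B AI BI eAB; apply/eqP/negPn/negP => AB.
  have := ends_disjoint sh AI BI AB; rewrite eAB -setI_eq0 setIid => /eqP e0.
  by move: (ends_card sh BI); rewrite e0 cards0.
have trivP : trivIset P.
  apply/trivIsetP => _ _ /imsetP[A AI ->] /imsetP[B BI ->] AB.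
  by apply: (ends_disjoint sh AI BI); apply: contraNneq AB => ->.
have coverT : cover P = setT.
  apply/eqP; rewrite eqEcard subsetT cardsT (card_sharp sh) -(eqP trivP).
  rewrite (eq_bigr (fun _ => 2)); last first.
    move=> _ /imsetP[A AI ->]; exact: (ends_card sh AI).
  by rewrite /= sum_nat_const card_in_imset // mulnC.
have : x \in cover P by rewrite coverT inE.
by case/bigcupP => _ /imsetP[A AI ->] xA; exists A.
Qed.

Section Meet.
Variable S : {set {set V}}.
Hypothesis SI : S \subset I.

Let inI B : B \in S -> B \in I. Proof. exact: subsetP SI B. Qed.

Lemma meet_extremal AL AR : AL \in S -> AR \in S ->
  (forall B, B \in S -> r (le B) <= r (le AL)) ->
  (forall B, B \in S -> r (re AR) <= r (re B)) ->
  meet S = rint r (le AL) (re AR).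
Proof.
move=> ALS ARS maxL minR; apply/setP => x; rewrite inE.
apply/bigcapP/andP => [xS | [Lx xR] B BS].
  move: (xS _ ALS) (xS _ ARS); rewrite !(mem_interval _ (inI _)) //.
  by case/andP => -> _ /andP[_ ->].
rewrite (mem_interval _ (inI BS)) (leq_trans (maxL _ BS) Lx).
exact: leq_trans xR (minR _ BS).
Qed.

Lemma class_left_end A AL : A \in I -> le A \in vclass I S -> AL \in S ->
  (forall B, B \in S -> r (le B) <= r (le AL)) -> A = AL.
Proof.
move=> AI; rewrite inE => /eqP typeS ALS maxL.
have AS : A \in S by rewrite -typeS inE AI (subsetP (ends_sub A)) ?left_end_ends.
have lA_AL : le A \in AL by move: ALS; rewrite -typeS inE => /andP[].
apply: left_end_inj => //; first exact: inI.
apply: (rank_inj sh); apply/eqP; rewrite eqn_leq maxL //.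
by move: lA_AL; rewrite (mem_interval _ (inI ALS)) => /andP[].
Qed.

Lemma class_right_end A AR : A \in I -> re A \in vclass I S -> AR \in S ->
  (forall B, B \in S -> r (re AR) <= r (re B)) -> A = AR.
Proof.
move=> AI; rewrite inE => /eqP typeS ARS minR.
have AS : A \in S by rewrite -typeS inE AI (subsetP (ends_sub A)) ?right_end_ends.
have rA_AR : re A \in AR by move: ARS; rewrite -typeS inE => /andP[].
apply: right_end_inj => //; first exact: inI.
apply: (rank_inj sh); apply/eqP; rewrite eqn_leq minR // andbT.
by move: rA_AR; rewrite (mem_interval _ (inI ARS)) => /andP[].
Qed.

(* If the meet of S is not in S, the interval A starting last does not end
   first: otherwise the meet would be A itself. *)
Lemma shorter_end A : A \in S -> (forall B, B \in S -> r (le B) <= r (le A)) ->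
  meet S \notin S -> exists2 B, B \in S & r (re B) < r (re A).
Proof.
move=> AS maxA nmeet; case: (arg_minnP (fun B => r (re B)) AS) => AR ARS minR.
exists AR => //; rewrite ltnNge; apply: contra nmeet => AleAR.
have minA B : B \in S -> r (re A) <= r (re B).
  by move=> BS; exact: leq_trans AleAR (minR B BS).
have [eA _ _] := interval_ends (inI AS).
by rewrite (meet_extremal AS AS maxA minA) -eA.
Qed.

Section LastStart.
Variable A : {set V}.
Hypotheses (AS : A \in S) (maxA : forall B, B \in S -> r (le B) <= r (le A)).
Hypotheses (nmeet : meet S \notin S) (lA_meet : le A \in meet S).

Lemma left_gap : exists v, r v < r (le A) /\
  forall w, r v <= r w < r (le A) -> w \in meet (S :\ A) :\: A.
Proof.
have [B BS ltBA] := shorter_end AS maxA nmeet.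
have BSA : B \in S :\ A.
  by apply/setD1P; split=> //; apply: contraTneq ltBA => ->; rewrite ltnn.
case: (arg_maxnP (fun C => r (le C)) BSA) => C /setD1P[CA CS] maxC.
have ltCA : r (le C) < r (le A).
  rewrite ltn_neqAle maxA // andbT; apply: contra CA => /eqP/(rank_inj sh).
  by move/(left_end_inj (inI CS) (inI AS)) => ->.
exists (le C); split=> // w /andP[Cw wA].
rewrite inE (mem_interval _ (inI AS)) ltn_geF //=.
apply/bigcapP => D /setD1P[DA DS].
have lA_D : le A \in D by move/bigcapP: lA_meet; apply.
rewrite (mem_interval _ (inI DS)) (leq_trans (maxC D _)) //=; last exact/setD1P.
by move: lA_D; rewrite (mem_interval _ (inI DS)) => /andP[_]; apply: leq_trans (ltnW wA).
Qed.

(* A vertex covered by all other intervals of S but not by A lies to the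
   left of A, since some interval of S ends before A does. *)
Lemma gap_left_of w : w \in meet (S :\ A) :\: A -> r w < r (le A).
Proof.
case/setDP => /bigcapP w_meet wA.
have [B BS ltBA] := shorter_end AS maxA nmeet.
have wB : w \in B.
  by apply/w_meet/setD1P; split=> //; apply: contraTneq ltBA => ->; rewrite ltnn.
move: wA wB; rewrite (mem_interval _ (inI AS)) (mem_interval _ (inI BS)).
rewrite negb_and -!ltnNge; case/orP => [// | ltAw /andP[_ le_wB]].
by have := ltn_trans (leq_ltn_trans le_wB ltBA) ltAw; rewrite ltnn.
Qed.

(* If the start of A has a type larger than S, an interval E outside S
   contains it; E reaches into the gap, so A is not exposed. *)
Lemma exposed_class : exposed I S A -> le A \in vclass I S.
Proof.
case/and3P => _ _ /forall_inP sep; have AI := inI AS.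
have [v [ltvA gap]] := left_gap.
have typeS : S \subset vtype I (le A).
  by apply/subsetP => B BS; rewrite inE inI //; move/bigcapP: lA_meet; apply.
rewrite inE eqEsubset typeS andbT; apply/subsetP => E; rewrite inE => /andP[EI lA_E].
apply: contraT => ES.
suff: ~~ ([disjoint E & meet S] || [disjoint E & meet (S :\ A) :\: A]).
  by rewrite sep // inE ES EI.
have ltEA : r (le E) < r (le A).
  rewrite ltn_neqAle; move: lA_E; rewrite (mem_interval _ EI) => /andP[-> _].
  rewrite andbT; apply: contra ES => /eqP/(rank_inj sh)/(left_end_inj EI AI) ->.
  exact: AS.
pose w := if r (le E) <= r v then v else le E.
have [vw Ew wA] : [/\ r v <= r w, r (le E) <= r w & r w < r (le A)].
  by rewrite /w; case: (leqP (r (le E)) (r v)) => h; split; rewrite // ltnW.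
rewrite negb_or -!setI_eq0; apply/andP; split; apply/set0Pn.
  by exists (le A); rewrite inE lA_E.
exists w; rewrite inE gap ?vw ?wA // andbT (mem_interval _ EI) Ew /=.
by move: lA_E; rewrite (mem_interval _ EI) => /andP[_]; apply: leq_trans (ltnW wA).
Qed.

(* Conversely, an interval E meeting both the meet of S and the gap
   contains the start of A, so if that vertex has type S, E lies in S. *)
Lemma class_exposed : le A \in vclass I S -> exposed I S A.
Proof.
move=> lA_class; have AI := inI AS.
have [v [ltvA gap]] := left_gap.
rewrite /exposed AS /=; apply/andP; split.
  apply/subsetPn; exists v; last by rewrite (mem_interval _ AI) ltn_geF.
  by have := gap v; rewrite leqnn ltvA inE => /(_ isT) /andP[].
apply/forall_inP => E; rewrite inE => /andP[ES EI]; apply: contraT.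
rewrite negb_or -!setI_eq0 => /andP[/set0Pn[u /setIP[Eu /bigcapP u_meet]]].
case/set0Pn => w /setIP[Ew /gap_left_of ltwA].
have lA_u : r (le A) <= r u by move: (u_meet _ AS); rewrite (mem_interval _ AI) => /andP[].
have /negP[] := ES; move: lA_class; rewrite inE => /eqP <-.
rewrite inE EI (mem_interval _ EI).
move: Eu Ew; rewrite !(mem_interval _ EI) => /andP[_ le_uE] /andP[le_Ew _].
by rewrite (leq_trans le_Ew (ltnW ltwA)) (leq_trans lA_u le_uE).
Qed.

Lemma exposed_left : exposed I S A = (le A \in vclass I S).
Proof. by apply/idP/idP; [exact: exposed_class | exact: class_exposed]. Qed.

End LastStart.

(* Only an interval starting last or ending first in S can be exposed: the
   others contain the meet of the remaining ones. *)
Lemma exposed_extremal AL AR A : AL \in S -> AR \in S ->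
  (forall B, B \in S -> r (le B) <= r (le AL)) ->
  (forall B, B \in S -> r (re AR) <= r (re B)) ->
  exposed I S A -> A = AL \/ A = AR.
Proof.
move=> ALS ARS maxL minR /and3P[AS ess _].
case: (eqVneq A AL) => [|AL']; first by left.
case: (eqVneq A AR) => [|AR']; first by right.
case/negP: ess; apply/subsetP => x /bigcapP x_meet.
have x_LR : x \in meet S.
  rewrite (meet_extremal ALS ARS maxL minR) inE.
  move: (x_meet AL) (x_meet AR); rewrite !inE ALS ARS !(mem_interval _ (inI _)) //.
  by rewrite eq_sym AL' eq_sym AR' => /(_ isT)/andP[-> _] /(_ isT)/andP[_ ->].
by move/bigcapP: x_LR; apply.
Qed.

End Meet.

End Endpoints.

Definition reverse_rank (V : finType) (r : V -> nat) (x : V) : nat := \max_y r y - r x.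

Section Reversal.
Variables (V : finType) (r : V -> nat).
Local Notation r' := (reverse_rank r).

Lemma reverse_leq x y : (r' x <= r' y) = (r y <= r x).
Proof.
rewrite /reverse_rank; have := @leq_bigmax _ r x; have := @leq_bigmax _ r y.
by move=> ry rx; apply/idP/idP; lia.
Qed.

Lemma ends_reverse A : ends r' A = ends r A.
Proof.
apply/setP => x; rewrite !inE orbC; congr (_ && (_ || _)).
  by apply: eq_forallb => y; rewrite reverse_leq.
by apply: eq_forallb => y; rewrite reverse_leq.
Qed.

Lemma left_end_reverse x0 A : left_end r' x0 A = right_end r x0 A.
Proof.
rewrite /left_end /right_end; congr odflt; apply: eq_pick => x /=.
by congr (_ && _); apply: eq_forallb => y; rewrite reverse_leq.
Qed.

Lemma sharp_reverse I : sharp_wrt r I -> sharp_wrt r' I.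
Proof.
case=> r_inj r_int ends2 ends_dis cardV; split=> //.
- by move=> x y /eqP; rewrite eqn_leq !reverse_leq -eqn_leq => /eqP/esym/r_inj.
- move=> A /r_int[a [b [hab ->]]]; exists b, a; rewrite reverse_leq; split=> //.
  by apply/setP => x; rewrite !inE !reverse_leq andbC.
- by move=> A AI; rewrite ends_reverse ends2.
- by move=> A B AI BI; rewrite !ends_reverse; exact: ends_dis.
Qed.

End Reversal.

Lemma exposed_right (V : finType) (r : V -> nat) (x0 : V) (I S : {set {set V}})
    (A : {set V}) : sharp_wrt r I -> S \subset I -> A \in S ->
  (forall B, B \in S -> r (right_end r x0 A) <= r (right_end r x0 B)) ->
  meet S \notin S -> right_end r x0 A \in meet S ->
  exposed I S A = (right_end r x0 A \in vclass I S).
Proof.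
move=> sh SI AS minA nmeet rA_meet.
rewrite -left_end_reverse.
rewrite (exposed_left (x0 := x0) (sharp_reverse sh) SI AS) ?left_end_reverse //.
by move=> B BS; rewrite !left_end_reverse reverse_leq minA.
Qed.

Lemma card_setI_pair (T : finType) (C : {set T}) (a b : T) : a != b ->
  #|C :&: [set a; b]| = (a \in C) + (b \in C).
Proof.
move=> ab; rewrite setIUr cardsU.
have card1 c : #|C :&: [set c]| = (c \in C).
  have [cC|cC] := boolP (c \in C); first by rewrite (setIidPr _) ?sub1set ?cards1.
  apply/eqP; rewrite cards_eq0 -subset0; apply/subsetP => x.
  by rewrite !inE => /andP[xC /eqP xc]; rewrite -xc xC in cC.
have -> : C :&: [set a] :&: (C :&: [set b]) = set0.
  apply/setP => x; rewrite !inE; case: (x =P a) => [->|]; last by rewrite !andbF.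
  by rewrite (negbTE ab) !andbF.
by rewrite !card1 cards0 subn0.
Qed.

Lemma vclass_meet (V : finType) (I S : {set {set V}}) x :
  x \in vclass I S -> x \in meet S.
Proof. by rewrite inE => /eqP <-; apply/bigcapP => B; rewrite inE => /andP[]. Qed.

Lemma vclass_sub (V : finType) (I S : {set {set V}}) x :
  x \in vclass I S -> S \subset I.
Proof. by rewrite inE => /eqP <-; apply/subsetP => B; rewrite inE => /andP[]. Qed.

Section Count.
Variables (V : finType) (r : V -> nat) (x0 : V) (I S : {set {set V}}).
Hypotheses (sh : sharp_wrt r I) (x0S : x0 \in vclass I S).
Variables AL AR : {set V}.
Hypotheses (ALS : AL \in S) (ARS : AR \in S).
Hypothesis maxL : forall B, B \in S -> r (left_end r x0 B) <= r (left_end r x0 AL).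
Hypothesis minR : forall B, B \in S -> r (right_end r x0 AR) <= r (right_end r x0 B).

Local Notation le := (left_end r x0).
Local Notation re := (right_end r x0).
Local Notation C := (vclass I S).

Let SI : S \subset I := vclass_sub x0S.

Lemma meetE : meet S = rint r (le AL) (re AR).
Proof. exact: (meet_extremal sh SI ALS ARS maxL minR). Qed.

Lemma left_le_right : r (le AL) <= r (re AR).
Proof. by have := vclass_meet x0S; rewrite meetE inE => /andP[]; apply: leq_trans. Qed.

(* A vertex of type S is the start of AL or the end of AR, so an interval
   has at most these two ends of type S. *)
Lemma class_ends_card A : A \in I ->
  #|C :&: ends r A| = ((A == AL) && (le AL \in C)) + ((A == AR) && (re AR \in C)).
Proof.
move=> AI; have [_ ltA ->] := interval_ends x0 sh AI.
have lr : le A != re A by apply: contraTneq ltA => ->; rewrite ltnn.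
rewrite card_setI_pair //; congr (nat_of_bool _ + nat_of_bool _).
  by apply/idP/andP => [lA | [/eqP-> //]]; rewrite -(class_left_end sh SI AI lA ALS maxL).
by apply/idP/andP => [rA | [/eqP-> //]]; rewrite -(class_right_end sh SI AI rA ARS minR).
Qed.

(* If the meet of S is itself an interval of S, it is both AL and AR, and
   every vertex of type S is one of its ends. *)
Lemma count_meet_in A : A \in I -> meet S \in S ->
  #|C :&: ends r A| = (A == meet S) * #|C|.
Proof.
move=> AI meetS; have MI := subsetP SI _ meetS.
have [lM rM _] := rint_ends x0 sh left_le_right; rewrite -meetE in lM rM.
have eL : meet S = AL := left_end_inj sh MI (subsetP SI _ ALS) lM.
have eR : meet S = AR := right_end_inj sh MI (subsetP SI _ ARS) rM.
have C_ends : C \subset ends r (meet S).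
  apply/subsetP => x xC; have [B BI xB] := ends_cover sh x.
  suff -> : meet S = B by [].
  have : 0 < #|C :&: ends r B| by apply/card_gt0P; exists x; rewrite inE xC.
  by rewrite class_ends_card // -eL -eR; case: eqP.
case: eqVneq => [->|AM]; first by rewrite mul1n (setIidPl C_ends).
by rewrite class_ends_card // -eL -eR (negbTE AM).
Qed.

(* Otherwise AL and AR differ, and the intervals with an end of type S are
   exactly the exposed ones. *)
Lemma count_meet_out A : A \in I -> meet S \notin S ->
  #|C :&: ends r A| = exposed I S A.
Proof.
move=> AI nmeet.
have LR : AL != AR.
  apply: contraNneq nmeet => eLR; have [eAL _ _] := interval_ends x0 sh (subsetP SI _ ALS).
  by rewrite meetE -eLR -eAL.
have exL : exposed I S AL = (le AL \in C).
  by apply: (exposed_left sh SI ALS maxL nmeet); rewrite meetE inE leqnn left_le_right.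
have exR : exposed I S AR = (re AR \in C).
  by apply: (exposed_right sh SI ARS minR nmeet); rewrite meetE inE leqnn left_le_right.
rewrite class_ends_card //.
case: (eqVneq A AL) => [->|AL']; first by rewrite (negbTE LR) addn0 exL.
case: (eqVneq A AR) => [->|AR']; first by rewrite exR.
case Aexp: (exposed I S A) => //.
by case: (exposed_extremal sh SI ALS ARS maxL minR Aexp) => eA; rewrite eA eqxx in AL' AR'.
Qed.

End Count.

Lemma class_ends_count (V : finType) (r : V -> nat) (I S : {set {set V}})
    (A : {set V}) (x : V) :
  sharp_wrt r I -> x \in vclass I S -> A \in I ->
  #|vclass I S :&: ends r A| = end_count I S A.
Proof.
move=> sh xS AI.
have [B BI xB] := ends_cover sh x.
have BS : B \in S.
  by move: xS; rewrite inE => /eqP <-; rewrite inE BI (subsetP (ends_sub r B)).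
case: (arg_maxnP (fun B => r (left_end r x B)) BS) => AL ALS maxL.
case: (arg_minnP (fun B => r (right_end r x B)) BS) => AR ARS minR.
rewrite /end_count; case: ifP => [meetS | /negbT nmeet].
  exact: (count_meet_in sh xS ALS ARS maxL minR AI meetS).
exact: (count_meet_out sh xS ALS ARS maxL minR AI nmeet).
Qed.

Definition end_owner (V : finType) (r : V -> nat) (I : {set {set V}}) (x : V) :
  option {set V} := [pick A in I | x \in ends r A].

Definition end_key (V : finType) (r : V -> nat) (I : {set {set V}}) (x : V) :
  {set {set V}} * option {set V} := (vtype I x, end_owner r I x).

Section Owner.
Variables (V : finType) (r : V -> nat) (I : {set {set V}}).
Hypothesis sh : sharp_wrt r I.

Lemma end_ownerE A x : A \in I -> (end_owner r I x == Some A) = (x \in ends r A).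
Proof.
move=> AI; rewrite /end_owner; case: pickP => [B /andP[BI xB] | /(_ A)].
  by apply/eqP/idP => [[<-] // | xA]; rewrite (ends_unique sh BI AI xB xA).
by rewrite AI /= => ->.
Qed.

Lemma end_key_fiber S A : A \in I ->
  [set x | end_key r I x == (S, Some A)] = vclass I S :&: ends r A.
Proof.
move=> AI; apply/setP => x.
by rewrite in_setI [in LHS]inE [x \in vclass _ _]inE /end_key xpair_eqE end_ownerE.
Qed.

Lemma end_key_fiber0 S o : (forall A, o = Some A -> A \notin I) ->
  [set x | end_key r I x == (S, o)] = set0.
Proof.
move=> oI; apply/setP => x; rewrite !inE /end_key xpair_eqE.
have [A AI xA] := ends_cover sh x.
have /eqP-> : end_owner r I x == Some A by rewrite end_ownerE.
by case: (Some A =P o) => [eA|]; rewrite ?andbF //; move: (oI A (esym eA)); rewrite AI.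
Qed.

End Owner.

Lemma end_key_card (V : finType) (r1 r2 : V -> nat) (I : {set {set V}}) :
  sharp_wrt r1 I -> sharp_wrt r2 I -> forall k,
  #|[set x | end_key r1 I x == k]| = #|[set x | end_key r2 I x == k]|.
Proof.
move=> sh1 sh2 [S o].
case: o => [A|]; last by rewrite !end_key_fiber0.
case AI: (A \in I); last by rewrite !end_key_fiber0 // => _ [<-]; rewrite AI.
rewrite !end_key_fiber //; case: (set_0Vmem (vclass I S)) => [-> | [x xS]].
  by rewrite !set0I.
by rewrite !(class_ends_count _ xS AI).
Qed.

Lemma fibers_perm (V : finType) (K : eqType) (k1 k2 : V -> K) :
  (forall k, #|[set x | k1 x == k]| = #|[set x | k2 x == k]|) ->
  exists2 pi : V -> V, bijective pi & forall x, k2 (pi x) = k1 x.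
Proof.
move=> hk.
pose s1 k := enum [set y | k1 y == k].
pose s2 k := enum [set y | k2 y == k].
have sz k : size (s1 k) = size (s2 k) by rewrite /s1 /s2 -!cardE.
have in1 x : x \in s1 (k1 x) by rewrite /s1 mem_enum inE.
have lt1 x : index x (s1 (k1 x)) < size (s2 (k1 x)) by rewrite -sz index_mem.
pose pi x := nth x (s2 (k1 x)) (index x (s1 (k1 x))).
have hk2 x : k2 (pi x) = k1 x.
  by have := mem_nth x (lt1 x); rewrite /s2 mem_enum inE => /eqP.
exists pi => //; apply: injF_bij => x y e.
have ek : k1 x = k1 y by rewrite -hk2 e hk2.
move: e; rewrite /pi ek (set_nth_default x y (lt1 y)) => /eqP.
have lx : index x (s1 (k1 y)) < size (s2 (k1 y)) by rewrite -ek.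
rewrite nth_uniq ?enum_uniq // => /eqP ei.
rewrite -(nth_index x (in1 x)) ek ei (set_nth_default y x) ?sz //.
by rewrite nth_index // -ek.
Qed.

Theorem relabel_ends (V : finType) (r1 r2 : V -> nat) (I : {set {set V}}) :
  sharp_wrt r1 I -> sharp_wrt r2 I ->
  exists2 pi : V -> V, bijective pi &
    forall A, A \in I -> pi @: A = A /\ pi @: ends r1 A = ends r2 A.
Proof.
move=> sh1 sh2; have [pi pi_bij key_pi] := fibers_perm (end_key_card sh1 sh2).
have pi_inj := bij_inj pi_bij.
have type_pi x : vtype I (pi x) = vtype I x := congr1 fst (key_pi x).
have owner_pi x : end_owner r2 I (pi x) = end_owner r1 I x := congr1 snd (key_pi x).
exists pi => // A AI; split.
  apply/eqP; rewrite eqEcard card_imset // leqnn andbT.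
  apply/subsetP => _ /imsetP[x xA ->].
  have : A \in vtype I x by rewrite inE AI xA.
  by rewrite -type_pi inE => /andP[].
apply/eqP; rewrite eqEcard card_imset // (ends_card sh1 AI) (ends_card sh2 AI) leqnn andbT.
apply/subsetP => _ /imsetP[x xA ->].
by rewrite -(end_ownerE sh2 _ AI) owner_pi end_ownerE.
Qed.

Section Transport.
Variables (V W : finType) (f : V -> W) (r : W -> nat).
Hypothesis f_bij : bijective f.

Let f_inj : injective f := bij_inj f_bij.

Lemma forall_in_imset (P : pred W) (A : {set V}) :
  [forall y in f @: A, P y] = [forall x in A, P (f x)].
Proof.
apply/forall_inP/forall_inP => h x; first by move=> xA; apply: h; exact: imset_f.
by case/imsetP => y yA ->; exact: h.
Qed.

Lemma ends_image A : f @: ends (r \o f) A = ends r (f @: A).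
Proof.
have [g _ gK] := f_bij.
apply/setP => y; rewrite -(gK y) (mem_imset _ _ f_inj) !inE (mem_imset _ _ f_inj).
by rewrite !forall_in_imset.
Qed.

Lemma sharp_pullback (I : {set {set V}}) (J : {set {set W}}) :
  [set f @: (A : {set V}) | A in I] = J -> sharp_wrt r J -> sharp_wrt (r \o f) I.
Proof.
move=> eJ [r_inj r_int ends2 ends_dis cardW].
have [g _ gK] := f_bij.
have imJ A : A \in I -> f @: A \in J by move=> AI; rewrite -eJ imset_f.
split.
- by move=> x y /r_inj/f_inj.
- move=> A /imJ/r_int[a [b [hab eAab]]]; exists (g a), (g b); rewrite /= !gK.
  split=> //; apply/setP => x.
  by rewrite -(mem_imset _ _ f_inj) eAab !inE /= !gK.
- by move=> A AI; rewrite -(card_imset _ f_inj) ends_image ends2 ?imJ.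
- move=> A B AI BI AB; rewrite -(imset_disjoint f_inj) !ends_image.
  by apply: ends_dis; rewrite ?imJ //; apply: contra_neq AB; exact: imset_inj.
by rewrite (bij_eq_card f_bij) cardW -eJ (card_imset _ (imset_inj f_inj)).
Qed.

End Transport.

Lemma sharp_ord (N : nat) (I : {set {set 'I_N}}) :
  sharp I -> sharp_wrt (@nat_of_ord N) I.
Proof.
case=> I_int cardI ends2 ends_dis; split; [exact: val_inj | exact: I_int | exact: ends2 |
  exact: ends_dis | by rewrite card_ord].
Qed.


Lemma extremes_ord (N : nat) (A : {set 'I_N}) : extremes A = ends (@nat_of_ord N) A.
Proof. by []. Qed.

Unset Implicit Arguments.

Theorem lemma10 (N M : nat) (I : {set {set 'I_N}}) (J : {set {set 'I_M}}) :
  sharp I -> sharp J ->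
  (exists phi : 'I_N -> 'I_M, hyp_iso I J phi) ->
  forall psi : 'I_N -> 'I_M, hyp_iso I J psi ->
  exists psi' : 'I_N -> 'I_M,
    hyp_iso I J psi' /\
    (forall A, A \in I ->
       psi' @: A = psi @: A /\ psi' @: extremes A = extremes (psi @: A)).
Proof.
move=> shI shJ _ psi [psi_bij eJ].
have sh_psi := sharp_pullback psi_bij eJ (sharp_ord shJ).
have [pi pi_bij pi_ends] := relabel_ends (sharp_ord shI) sh_psi.
exists (psi \o pi); split.
  split; first exact: bij_comp.
  by rewrite -eJ; apply: eq_in_imset => A AI; rewrite /= imset_comp (pi_ends A AI).1.
move=> A AI; have [piA piE] := pi_ends A AI; split; first by rewrite imset_comp piA.
by rewrite imset_comp !extremes_ord piE (ends_image _ psi_bij).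
Qed.
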